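(* Let $[\xi_1\to\xi_2\to\xi_1]$ be a simple heteroclinic cycle in $\mathbb{R}^4$ with two nodes. Then $\xi_1$ and $\xi_2$ lie in the same one-dimensional linear subspace of $\mathbb{R}^4$.
   Context: Setting: $\dot y=f(y)$ on $\mathbb{R}^4$ with $f$ equivariant under a finite group $\Gamma\subset O(4)$. Each connection $[\xi_j\to\xi_{j+1}]\subset W^u(\xi_j)\cap W^s(\xi_{j+1})$ is a saddle-sink connection in a fixed-point subspace $P_j=\mathrm{Fix}(\Sigma_j)$, $\Sigma_j\subset\Gamma$ an isotropy subgroup, and $L_j=P_{j-1}\cap P_j$. A robust cycle $X\subset\mathbb{R}^4\setminus\{0\}$ is simple if $\dim P_j=2$ for each $j$, $X$ meets each connected component of $L_j\setminus\{0\}$ in at most one point, and the linearizations at its equilibria have no double eigenvalues. *)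

From Stdlib Require Import Reals Lra List.
Open Scope R_scope.

Inductive I4 : Set := i0 | i1 | i2 | i3.
Definition I4_eq_dec (i j : I4) : {i = j} + {i <> j}.
Proof. decide equality. Defined.

Definition vec := I4 -> R.
Definition mat := I4 -> I4 -> R.

Definition sum4 (F : I4 -> R) : R := F i0 + F i1 + F i2 + F i3.
Definition vzero : vec := fun _ => 0.
Definition vadd (x y : vec) : vec := fun i => x i + y i.
Definition vsub (x y : vec) : vec := fun i => x i - y i.
Definition vscale (a : R) (x : vec) : vec := fun i => a * x i.
Definition vnorm (x : vec) : R := sqrt (sum4 (fun i => x i * x i)).

Definition delta (i j : I4) : R := if I4_eq_dec i j then 1 else 0.
Definition mid : mat := delta.
Definition mapply (A : mat) (x : vec) : vec := fun i => sum4 (fun j => A i j * x j).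
Definition mmul (A B : mat) : mat := fun i j => sum4 (fun k => A i k * B k j).
Definition mtr (A : mat) : mat := fun i j => A j i.

Definition orthogonal (M : mat) : Prop :=
  forall i j, sum4 (fun k => M k i * M k j) = delta i j.

Definition finite_orthogonal_group (G : mat -> Prop) : Prop :=
  (exists l : list mat, forall g, G g <-> In g l) /\
  G mid /\
  (forall g h, G g -> G h -> G (mmul g h)) /\
  (forall g, G g -> G (mtr g)) /\
  (forall g, G g -> orthogonal g).

Definition equivariant (G : mat -> Prop) (f : vec -> vec) : Prop :=
  forall g x, G g -> f (mapply g x) = mapply g (f x).

Definition isotropy_subgroup (G S : mat -> Prop) : Prop :=
  exists x : vec, forall g, S g <-> (G g /\ mapply g x = x).

Definition Fix (S : mat -> Prop) (x : vec) : Prop :=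
  forall g, S g -> mapply g x = x.

Definition dim2 (P : vec -> Prop) : Prop :=
  exists u v : vec,
    (forall a b, vadd (vscale a u) (vscale b v) = vzero -> a = 0 /\ b = 0) /\
    (forall x, P x <-> exists a b, x = vadd (vscale a u) (vscale b v)).

Definition has_derivative (f : vec -> vec) (A : mat) (x : vec) : Prop :=
  forall eps, 0 < eps -> exists dlt, 0 < dlt /\
    forall h, vnorm h < dlt ->
      vnorm (vsub (vsub (f (vadd x h)) (f x)) (mapply A h)) <= eps * vnorm h.

Definition is_C1 (f : vec -> vec) (Df : vec -> mat) : Prop :=
  (forall x, has_derivative f (Df x) x) /\
  (forall i j x eps, 0 < eps -> exists dlt, 0 < dlt /\
     forall y, vnorm (vsub y x) < dlt -> Rabs (Df y i j - Df x i j) < eps).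

Definition is_solution_on (f : vec -> vec) (phi : R -> vec) (D : R -> Prop) : Prop :=
  forall t, D t -> forall i, derivable_pt_lim (fun s => phi s i) t (f (phi t) i).

Definition tends_at_plus_inf (phi : R -> vec) (xi : vec) : Prop :=
  forall eps, 0 < eps -> exists T, forall t, T <= t -> vnorm (vsub (phi t) xi) < eps.

Definition tends_at_minus_inf (phi : R -> vec) (xi : vec) : Prop :=
  forall eps, 0 < eps -> exists T, forall t, t <= T -> vnorm (vsub (phi t) xi) < eps.

Definition Wu (f : vec -> vec) (xi : vec) (x : vec) : Prop :=
  exists phi : R -> vec, phi 0 = x /\ is_solution_on f phi (fun t => t <= 0) /\
    tends_at_minus_inf phi xi.

Definition Ws (f : vec -> vec) (xi : vec) (x : vec) : Prop :=
  exists phi : R -> vec, phi 0 = x /\ is_solution_on f phi (fun t => 0 <= t) /\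
    tends_at_plus_inf phi xi.

Definition saddle_in (A : mat) (P : vec -> Prop) : Prop :=
  exists (u v : vec) (lu lv : R),
    P u /\ P v /\ u <> vzero /\ v <> vzero /\
    mapply A u = vscale lu u /\ mapply A v = vscale lv v /\ 0 < lu /\ lv < 0.

(* sink of the restriction of A to P: every (complex) eigenvalue a + i b of
   A|_P, with eigenvector u + i w (u, w in P, not both zero), has a < 0. *)
Definition sink_in (A : mat) (P : vec -> Prop) : Prop :=
  forall (a b : R) (u w : vec), P u -> P w -> (u <> vzero \/ w <> vzero) ->
    mapply A u = vsub (vscale a u) (vscale b w) ->
    mapply A w = vadd (vscale b u) (vscale a w) ->
    a < 0.

Definition C := (R * R)%type.
Definition C0 : C := (0, 0).
Definition C1 : C := (1, 0).
Definition Cof (r : R) : C := (r, 0).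
Definition Cadd (z w : C) : C := (fst z + fst w, snd z + snd w).
Definition Csub (z w : C) : C := (fst z - fst w, snd z - snd w).
Definition Cmul (z w : C) : C :=
  (fst z * fst w - snd z * snd w, fst z * snd w + snd z * fst w).

Definition det3c (a b c d e f g h k : C) : C :=
  Cadd (Csub (Cmul a (Csub (Cmul e k) (Cmul f h)))
             (Cmul b (Csub (Cmul d k) (Cmul f g))))
       (Cmul c (Csub (Cmul d h) (Cmul e g))).

Definition det4c (M : I4 -> I4 -> C) : C :=
  Cadd (Csub (Cmul (M i0 i0) (det3c (M i1 i1) (M i1 i2) (M i1 i3)
                                    (M i2 i1) (M i2 i2) (M i2 i3)
                                    (M i3 i1) (M i3 i2) (M i3 i3)))
             (Cmul (M i0 i1) (det3c (M i1 i0) (M i1 i2) (M i1 i3)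
                                    (M i2 i0) (M i2 i2) (M i2 i3)
                                    (M i3 i0) (M i3 i2) (M i3 i3))))
       (Csub (Cmul (M i0 i2) (det3c (M i1 i0) (M i1 i1) (M i1 i3)
                                    (M i2 i0) (M i2 i1) (M i2 i3)
                                    (M i3 i0) (M i3 i1) (M i3 i3)))
             (Cmul (M i0 i3) (det3c (M i1 i0) (M i1 i1) (M i1 i2)
                                    (M i2 i0) (M i2 i1) (M i2 i2)
                                    (M i3 i0) (M i3 i1) (M i3 i2)))).

Definition charpoly (A : mat) (z : C) : C :=
  det4c (fun i j => Csub (if I4_eq_dec i j then z else C0) (Cof (A i j))).

(* A has an eigenvalue of algebraic multiplicity >= 2:
   det(zI - A) = (z - l)^2 (z - m1)(z - m2) for some complex l, m1, m2. *)
Definition has_double_eigenvalue (A : mat) : Prop :=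
  exists l m1 m2 : C, forall z : C,
    charpoly A z = Cmul (Cmul (Csub z l) (Csub z l)) (Cmul (Csub z m1) (Csub z m2)).

(* path components; for an open subset of a linear subspace (locally path
   connected) these coincide with the connected components. *)
Definition same_component (S : vec -> Prop) (x y : vec) : Prop :=
  exists gam : R -> vec,
    (forall i, continuity (fun t => gam t i)) /\
    gam 0 = x /\ gam 1 = y /\ (forall t, 0 <= t <= 1 -> S (gam t)).

Definition meets_components_at_most_once (X L : vec -> Prop) : Prop :=
  forall x y, X x -> X y ->
    same_component (fun z => L z /\ z <> vzero) x y -> L x -> x <> vzero -> x = y.

(* [xi1 -> xi2 -> xi1]: the connection [xi1 -> xi2] is Cn1 and lies in
   P1 = Fix(S1); the connection [xi2 -> xi1] is Cn2 and lies in P2 = Fix(S2)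
   (P0 = P2 since indices are taken mod 2);  L1 = P2 ∩ P1, L2 = P1 ∩ P2. *)
Definition robust_cycle2 (G : mat -> Prop) (f : vec -> vec) (Df : vec -> mat)
  (xi1 xi2 : vec) (S1 S2 : mat -> Prop) (Cn1 Cn2 : vec -> Prop) : Prop :=
  f xi1 = vzero /\ f xi2 = vzero /\ xi1 <> xi2 /\
  isotropy_subgroup G S1 /\ isotropy_subgroup G S2 /\
  (exists x, Cn1 x) /\
  (forall x, Cn1 x -> Fix S1 x /\ Wu f xi1 x /\ Ws f xi2 x) /\
  saddle_in (Df xi1) (Fix S1) /\ sink_in (Df xi2) (Fix S1) /\
  (exists x, Cn2 x) /\
  (forall x, Cn2 x -> Fix S2 x /\ Wu f xi2 x /\ Ws f xi1 x) /\
  saddle_in (Df xi2) (Fix S2) /\ sink_in (Df xi1) (Fix S2) /\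
  (forall x, (x = xi1 \/ x = xi2 \/ Cn1 x \/ Cn2 x) -> x <> vzero).

Definition simple_cycle2 (G : mat -> Prop) (f : vec -> vec) (Df : vec -> mat)
  (xi1 xi2 : vec) (S1 S2 : mat -> Prop) (Cn1 Cn2 : vec -> Prop) : Prop :=
  robust_cycle2 G f Df xi1 xi2 S1 S2 Cn1 Cn2 /\
  dim2 (Fix S1) /\ dim2 (Fix S2) /\
  meets_components_at_most_once (fun x => x = xi1 \/ x = xi2 \/ Cn1 x \/ Cn2 x)
    (fun x => Fix S2 x /\ Fix S1 x) /\
  meets_components_at_most_once (fun x => x = xi1 \/ x = xi2 \/ Cn1 x \/ Cn2 x)
    (fun x => Fix S1 x /\ Fix S2 x) /\
  ~ has_double_eigenvalue (Df xi1) /\ ~ has_double_eigenvalue (Df xi2).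

(* The equilibria of the cycle are limits of trajectories lying in the fixed-point
   planes P1 = Fix(S1) and P2 = Fix(S2).  A trajectory of the equivariant, locally
   Lipschitz field that starts in Fix(S) stays there: for g in S the defect
   |g phi(t) - phi(t)|^2 obeys a Gronwall inequality and vanishes at t = 0.  Since
   Fix(S) is closed, xi1 and xi2 both lie in L = P1 /\ P2.  If they were not
   collinear, the segment joining them would be a path in L \ {0}, putting two
   distinct points of the cycle in one component of L \ {0}, against simplicity. *)

From Stdlib Require Import Reals Lra FunctionalExtensionality Classical.
Open Scope R_scope.

Definition sumsq (x : vec) : R := sum4 (fun i => x i * x i).

Definition box (p : vec) (r : R) (y : vec) : Prop := forall i, Rabs (y i - p i) < r.

Lemma sumsq_ge0 x : 0 <= sumsq x.
Proof. unfold sumsq, sum4. nra. Qed.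

Lemma sumsq_le0_coord x : sumsq x <= 0 -> forall i, x i = 0.
Proof. unfold sumsq, sum4; intros H i; destruct i; nra. Qed.

Lemma Rabs_sq a : Rabs a * Rabs a = a * a.
Proof. rewrite <- Rabs_mult. apply Rabs_right. nra. Qed.

Lemma coord_le_vnorm x i : Rabs (x i) <= vnorm x.
Proof.
  unfold vnorm. rewrite <- sqrt_Rsqr_abs. apply sqrt_le_1_alt.
  unfold Rsqr, sum4; destruct i; nra.
Qed.

Lemma vnorm_scale k d : vnorm (vscale k d) = Rabs k * vnorm d.
Proof.
  unfold vnorm, vscale.
  replace (sum4 (fun i => k * d i * (k * d i))) with ((k * k) * sum4 (fun i => d i * d i))
    by (unfold sum4; ring).
  rewrite sqrt_mult_alt by nra. rewrite <- sqrt_Rsqr_abs. reflexivity.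
Qed.

Lemma vnorm_lt_of_box p r y : 0 < r -> box p r y -> vnorm (vsub y p) < 2 * r.
Proof.
  intros Hr Hb. unfold vnorm. rewrite <- (sqrt_square (2 * r)) by lra.
  apply sqrt_lt_1_alt. split; [unfold sum4; nra|].
  assert (Hsq : forall i, (y i - p i) * (y i - p i) < r * r).
  { intros i. specialize (Hb i). apply Rabs_def2 in Hb. nra. }
  unfold sum4, vsub.
  pose proof (Hsq i0); pose proof (Hsq i1); pose proof (Hsq i2); pose proof (Hsq i3). nra.
Qed.

Lemma box_convex p r y z s : box p r y -> box p r z -> 0 <= s <= 1 ->
  box p r (vadd z (vscale s (vsub y z))).
Proof.
  intros Hy Hz Hs i. specialize (Hy i); specialize (Hz i).
  apply Rabs_def2 in Hy; apply Rabs_def2 in Hz. apply Rabs_def1; unfold vadd, vscale, vsub.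
  - replace (z i + s * (y i - z i) - p i) with ((1 - s) * (z i - p i) + s * (y i - p i)) by ring.
    destruct (Req_dec s 0) as [->|Hs0]; nra.
  - replace (z i + s * (y i - z i) - p i) with ((1 - s) * (z i - p i) + s * (y i - p i)) by ring.
    destruct (Req_dec s 0) as [->|Hs0]; nra.
Qed.

Lemma sum4_ge_term (F : I4 -> R) i : (forall j, 0 <= F j) -> F i <= sum4 F.
Proof.
  intros H. unfold sum4.
  pose proof (H i0); pose proof (H i1); pose proof (H i2); pose proof (H i3). destruct i; lra.
Qed.

Lemma sum4_mul_sq_le (a d : vec) :
  sum4 (fun j => a j * d j) * sum4 (fun j => a j * d j) <= sumsq a * sumsq d.
Proof.
  unfold sumsq, sum4.
  (* Lagrange's identity *)
  assert (E : (a i0 * a i0 + a i1 * a i1 + a i2 * a i2 + a i3 * a i3) *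
              (d i0 * d i0 + d i1 * d i1 + d i2 * d i2 + d i3 * d i3) -
              (a i0 * d i0 + a i1 * d i1 + a i2 * d i2 + a i3 * d i3) *
              (a i0 * d i0 + a i1 * d i1 + a i2 * d i2 + a i3 * d i3) =
     Rsqr (a i0 * d i1 - a i1 * d i0) + Rsqr (a i0 * d i2 - a i2 * d i0) +
     Rsqr (a i0 * d i3 - a i3 * d i0) + Rsqr (a i1 * d i2 - a i2 * d i1) +
     Rsqr (a i1 * d i3 - a i3 * d i1) + Rsqr (a i2 * d i3 - a i3 * d i2))
    by (unfold Rsqr; ring).
  pose proof (Rle_0_sqr (a i0 * d i1 - a i1 * d i0)); pose proof (Rle_0_sqr (a i0 * d i2 - a i2 * d i0));
  pose proof (Rle_0_sqr (a i0 * d i3 - a i3 * d i0)); pose proof (Rle_0_sqr (a i1 * d i2 - a i2 * d i1));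
  pose proof (Rle_0_sqr (a i1 * d i3 - a i3 * d i1)); pose proof (Rle_0_sqr (a i2 * d i3 - a i3 * d i2)).
  lra.
Qed.

Lemma sumsq_le_of_coord_bound (a : vec) B : (forall j, Rabs (a j) <= B) -> sumsq a <= 4 * (B * B).
Proof.
  intros H.
  assert (Hsq : forall j, a j * a j <= B * B).
  { intros j. rewrite <- Rabs_sq. pose proof (Rabs_pos (a j)). specialize (H j). nra. }
  unfold sumsq, sum4. pose proof (Hsq i0); pose proof (Hsq i1); pose proof (Hsq i2); pose proof (Hsq i3). lra.
Qed.

Lemma I4_uniform_radius (Q : I4 -> R -> Prop) :
  (forall i d d', 0 < d' <= d -> Q i d -> Q i d') ->
  (forall i, exists d, 0 < d /\ Q i d) -> exists d, 0 < d /\ forall i, Q i d.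
Proof.
  intros Hmono H.
  destruct (H i0) as [a [Ha Qa]]; destruct (H i1) as [b [Hb Qb]];
  destruct (H i2) as [c [Hc Qc]]; destruct (H i3) as [e [He Qe]].
  assert (Hm : 0 < Rmin (Rmin a b) (Rmin c e)) by (repeat apply Rmin_pos; lra).
  pose proof (Rmin_l (Rmin a b) (Rmin c e)); pose proof (Rmin_r (Rmin a b) (Rmin c e)).
  pose proof (Rmin_l a b); pose proof (Rmin_r a b); pose proof (Rmin_l c e); pose proof (Rmin_r c e).
  exists (Rmin (Rmin a b) (Rmin c e)). split; [exact Hm|].
  intros i; destruct i; [apply (Hmono _ a)|apply (Hmono _ b)|apply (Hmono _ c)|apply (Hmono _ e)];
    auto; lra.
Qed.

Lemma orthogonal_entry_bound g : orthogonal g -> forall i j, Rabs (g i j) <= 1.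
Proof.
  intros H i j. specialize (H j j). unfold delta in H.
  destruct (I4_eq_dec j j) as [_|Hjj]; [|congruence].
  assert (Hsq : g i j * g i j <= 1) by (apply (Rle_trans _ _ _ (sum4_ge_term (fun k => g k j * g k j) i
     ltac:(intros; nra))); lra).
  rewrite <- Rabs_sq in Hsq. pose proof (Rabs_pos (g i j)). nra.
Qed.

Lemma mapply_coord_bound (g : mat) (v : vec) r i :
  (forall i j, Rabs (g i j) <= 1) -> (forall j, Rabs (v j) < r) -> Rabs (mapply g v i) < 4 * r.
Proof.
  intros Hg Hv.
  assert (H : forall j, Rabs (g i j * v j) < r).
  { intros j. rewrite Rabs_mult. pose proof (Hg i j); pose proof (Hv j);
    pose proof (Rabs_pos (g i j)); pose proof (Rabs_pos (v j)). nra. }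
  unfold mapply, sum4.
  pose proof (Rabs_triang (g i i0 * v i0 + g i i1 * v i1 + g i i2 * v i2) (g i i3 * v i3)).
  pose proof (Rabs_triang (g i i0 * v i0 + g i i1 * v i1) (g i i2 * v i2)).
  pose proof (Rabs_triang (g i i0 * v i0) (g i i1 * v i1)).
  pose proof (H i0); pose proof (H i1); pose proof (H i2); pose proof (H i3). lra.
Qed.
Lemma derivable_pt_lim_eps_delta F x l : derivable_pt_lim F x l ->
  forall e, 0 < e -> exists d, 0 < d /\ forall t, Rabs (t - x) < d -> Rabs (F t - F x) < e.
Proof.
  intros H e He.
  assert (Hc : continuity_pt F x) by (apply derivable_continuous_pt; exists l; exact H).
  destruct (Hc e He) as [d [Hd Hclose]].
  exists d. split; [exact Hd|]. intros t Ht.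
  destruct (Req_dec x t) as [<-|Hxt].
  - rewrite Rminus_diag, Rabs_R0. exact He.
  - exact (Hclose t (conj (conj I Hxt) Ht)).
Qed.

Lemma derivable_pt_lim_exp_scal M x : derivable_pt_lim (fun s => exp (M * s)) x (exp (M * x) * M).
Proof.
  assert (H : derivable_pt_lim (fun s => M * s) x M).
  { pose proof (derivable_pt_lim_scal id M x 1 (derivable_pt_lim_id x)) as D.
    rewrite Rmult_1_r in D. exact D. }
  exact (derivable_pt_lim_comp (fun s => M * s) exp x M (exp (M * x)) H (derivable_pt_lim_exp _)).
Qed.

Lemma derivable_pt_lim_along_segment f Df : (forall x, has_derivative f (Df x) x) ->
  forall z d s i, derivable_pt_lim (fun s => f (vadd z (vscale s d)) i) s
     (mapply (Df (vadd z (vscale s d))) d i).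
Proof.
  intros Hd z d s i eps Heps.
  set (x := vadd z (vscale s d)).
  set (nd := vnorm d).
  assert (Hnd : 0 <= nd) by apply sqrt_pos.
  destruct (Hd x (eps / 2 / (nd + 1))) as [dlt [Hdlt Hdl]].
  { apply Rdiv_lt_0_compat; lra. }
  assert (Hpos : 0 < dlt / (nd + 1)) by (apply Rdiv_lt_0_compat; lra).
  exists (mkposreal _ Hpos). simpl. intros k Hk0 Hk.
  assert (Heq : vadd z (vscale (s + k) d) = vadd x (vscale k d)).
  { apply functional_extensionality; intro j; unfold x, vadd, vscale; ring. }
  rewrite Heq.
  assert (Hn : vnorm (vscale k d) < dlt).
  { rewrite vnorm_scale. fold nd.
    apply (Rmult_lt_compat_r (nd + 1)) in Hk; [|lra].
    replace (dlt / (nd + 1) * (nd + 1)) with dlt in Hk by (field; lra).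
    pose proof (Rabs_pos k). nra. }
  specialize (Hdl _ Hn). rewrite vnorm_scale in Hdl. fold nd in Hdl.
  set (L := mapply (Df x) d i).
  assert (Hc : Rabs ((f (vadd x (vscale k d)) i - f x i) - k * L) <= eps / 2 / (nd + 1) * (Rabs k * nd)).
  { eapply Rle_trans; [|exact Hdl].
    replace (k * L) with (mapply (Df x) (vscale k d) i) by (unfold L, mapply, vscale, sum4; ring).
    exact (coord_le_vnorm _ i). }
  set (D := f (vadd x (vscale k d)) i - f x i) in *.
  assert (Hk' : 0 < Rabs k) by (apply Rabs_pos_lt; auto).
  replace (D / k - L) with ((D - k * L) / k) by (field; auto).
  unfold Rdiv. rewrite Rabs_mult, Rabs_inv.
  apply (Rmult_lt_reg_r (Rabs k)); auto.
  rewrite Rmult_assoc, Rinv_l, Rmult_1_r by lra.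
  assert (eps / 2 / (nd + 1) * (Rabs k * nd) < eps * Rabs k); [|lra].
  replace (eps / 2 / (nd + 1) * (Rabs k * nd)) with ((eps * Rabs k) * (nd / (2 * (nd + 1))))
    by (field; lra).
  assert (nd / (2 * (nd + 1)) < 1).
  { apply (Rmult_lt_reg_r (2 * (nd + 1))); [lra|].
    unfold Rdiv. rewrite Rmult_assoc, Rinv_l by lra. lra. }
  assert (0 < eps * Rabs k) by nra. nra.
Qed.

Definition locally_lipschitz (F : vec -> vec) : Prop :=
  forall p, exists rho K, 0 < rho /\ 0 <= K /\
    forall y z, box p rho y -> box p rho z -> sumsq (vsub (F y) (F z)) <= K * sumsq (vsub y z).

Lemma locally_lipschitz_opp F : locally_lipschitz F -> locally_lipschitz (fun x i => - F x i).
Proof.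
  intros H p. destruct (H p) as [r [K [Hr [HK Hl]]]]. exists r, K. repeat split; auto.
  intros y z Hy Hz.
  replace (sumsq (vsub (fun i => - F y i) (fun i => - F z i))) with (sumsq (vsub (F y) (F z)))
    by (unfold sumsq, vsub, sum4; ring).
  auto.
Qed.

Lemma C1_Jacobian_locally_bounded f Df : is_C1 f Df -> forall p,
  exists d B, 0 < d /\ 0 <= B /\ forall i j y, vnorm (vsub y p) < d -> Rabs (Df y i j) <= B.
Proof.
  intros [_ Hcont] p.
  destruct (I4_uniform_radius
      (fun i d => forall j y, vnorm (vsub y p) < d -> Rabs (Df y i j - Df p i j) < 1))
    as [d [Hd Hclose]].
  { intros i d d' Hd' HQ j y Hy. apply HQ. lra. }
  { intros i. apply (I4_uniform_radius (fun j d => forall y, vnorm (vsub y p) < d -> _)).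
    - intros j d d' Hd' HQ y Hy. apply HQ. lra.
    - intros j. exact (Hcont i j p 1 Rlt_0_1). }
  assert (Hsum0 : forall k, 0 <= sum4 (fun j => Rabs (Df p k j))).
  { intros k. unfold sum4. pose proof (Rabs_pos (Df p k i0)); pose proof (Rabs_pos (Df p k i1));
      pose proof (Rabs_pos (Df p k i2)); pose proof (Rabs_pos (Df p k i3)). lra. }
  exists d, (sum4 (fun i => sum4 (fun j => Rabs (Df p i j))) + 1). split; [exact Hd|].
  split; [pose proof (sum4_ge_term _ i0 Hsum0); pose proof (Hsum0 i0); lra|].
  intros i j y Hy.
  assert (Hpij : Rabs (Df p i j) <= sum4 (fun i => sum4 (fun j => Rabs (Df p i j)))).
  { eapply Rle_trans; [apply (sum4_ge_term (fun j => Rabs (Df p i j)) j)|];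
      [intros; apply Rabs_pos|].
    exact (sum4_ge_term _ i Hsum0). }
  pose proof (Hclose i j y Hy).
  pose proof (Rabs_triang_inv (Df y i j) (Df p i j)). lra.
Qed.

Lemma C1_locally_lipschitz f Df : is_C1 f Df -> locally_lipschitz f.
Proof.
  intros HC1 p.
  destruct (C1_Jacobian_locally_bounded f Df HC1 p) as [d [B [Hd [HB0 HB]]]].
  exists (d / 2), (16 * (B * B)). split; [lra|]. split; [nra|].
  intros y z Hy Hz.
  set (dv := vsub y z).
  assert (Hcoord : forall i, (f y i - f z i) * (f y i - f z i) <= 4 * (B * B) * sumsq dv).
  { intros i.
    destruct (MVT_cor2 (fun s => f (vadd z (vscale s dv)) i)
                (fun s => mapply (Df (vadd z (vscale s dv))) dv i) 0 1 Rlt_0_1)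
      as [c [Hmvt Hc]].
    { intros c _. apply derivable_pt_lim_along_segment. exact (proj1 HC1). }
    replace (vadd z (vscale 1 dv)) with y in Hmvt
      by (apply functional_extensionality; intro k; unfold vadd, vscale, dv, vsub; ring).
    replace (vadd z (vscale 0 dv)) with z in Hmvt
      by (apply functional_extensionality; intro k; unfold vadd, vscale, dv, vsub; ring).
    rewrite Hmvt, Rminus_0_r, Rmult_1_r.
    assert (Hbox : vnorm (vsub (vadd z (vscale c dv)) p) < d).
    { replace d with (2 * (d / 2)) by field.
      apply vnorm_lt_of_box; [lra|]. apply box_convex; auto; lra. }
    eapply Rle_trans; [apply sum4_mul_sq_le|].
    apply Rmult_le_compat_r; [apply sumsq_ge0|].
    apply sumsq_le_of_coord_bound. intros j. exact (HB i j _ Hbox). }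
  unfold sumsq at 1, sum4, vsub at 1 2 3 4 5 6 7 8.
  pose proof (Hcoord i0); pose proof (Hcoord i1); pose proof (Hcoord i2); pose proof (Hcoord i3).
  lra.
Qed.

Lemma backward_induction (P : R -> Prop) :
  P 0 ->
  (forall tau, tau <= 0 -> P tau -> exists d, 0 < d /\ forall t, tau - d < t <= tau -> P t) ->
  (forall tau, tau < 0 -> (forall t, tau < t <= 0 -> P t) -> P tau) ->
  forall t, t <= 0 -> P t.
Proof.
  intros H0 Hopen Hclosed t1 Ht1. apply NNPP. intros Hn.
  set (A := fun s => 0 <= s /\ forall t, - s <= t <= 0 -> P t).
  assert (HA0 : A 0) by (split; [lra|]; intros t Ht; replace t with 0 by lra; exact H0).
  destruct (completeness A) as [m [Hub Hlub]].
  { exists (- t1). intros s [Hs HP]. destruct (Rle_dec s (- t1)) as [|Hgt]; [lra|].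
    exfalso. apply Hn, HP. lra. }
  { exists 0. exact HA0. }
  assert (Hm0 : 0 <= m) by exact (Hub 0 HA0).
  assert (Hright : forall t, - m < t <= 0 -> P t).
  { intros t Ht. apply NNPP. intros HnP.
    assert (Hbound : is_upper_bound A (- t)).
    { intros s [Hs HP]. destruct (Rle_dec s (- t)) as [|Hgt]; [lra|].
      exfalso. apply HnP, HP. lra. }
    specialize (Hlub _ Hbound). lra. }
  assert (Hm : P (- m)).
  { destruct (Req_dec m 0) as [->|Hm]; [rewrite Ropp_0; exact H0|].
    apply Hclosed; [lra|exact Hright]. }
  destruct (Hopen (- m) ltac:(lra) Hm) as [d [Hd Hloc]].
  assert (Hext : A (m + d / 2)).
  { split; [lra|]. intros t Ht.
    destruct (Rle_dec t (- m)); [apply Hloc|apply Hright]; lra. }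
  specialize (Hub _ Hext). lra.
Qed.

Lemma vanishes_at_left_end F tau : tau < 0 ->
  (forall e, 0 < e -> exists d, 0 < d /\ forall t, Rabs (t - tau) < d -> Rabs (F t - F tau) < e) ->
  (forall t, tau < t <= 0 -> F t = 0) -> F tau = 0.
Proof.
  intros Htau Hcont Hzero. apply NNPP. intros Hne.
  destruct (Hcont (Rabs (F tau)) (Rabs_pos_lt _ Hne)) as [d [Hd Hclose]].
  pose proof (Rmin_l d (- tau)); pose proof (Rmin_r d (- tau)).
  assert (Hpos : 0 < Rmin d (- tau)) by (apply Rmin_pos; lra).
  specialize (Hclose (tau + Rmin d (- tau) / 2) ltac:(rewrite Rabs_right; lra)).
  rewrite Hzero, Rminus_0_l, Rabs_Ropp in Hclose by lra. lra.
Qed.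

Lemma gronwall_backward (E E' : R -> R) M a b : a < b ->
  (forall c, a <= c <= b -> derivable_pt_lim E c (E' c)) ->
  (forall c, a < c < b -> - M * E c <= E' c) ->
  E b = 0 -> E a <= 0.
Proof.
  intros Hab HE Hineq Hb.
  (* [E(s) e^(M s)] is nondecreasing on [a, b] *)
  destruct (MVT_cor2 (fun s => E s * exp (M * s)) (fun c => E' c * exp (M * c) + E c * (exp (M * c) * M))
              a b Hab) as [c [Hmvt Hc]].
  { intros c Hc.
    exact (derivable_pt_lim_mult E (fun s => exp (M * s)) c _ _ (HE c Hc) (derivable_pt_lim_exp_scal M c)). }
  rewrite Hb, Rmult_0_l in Hmvt.
  pose proof (exp_pos (M * c)); pose proof (exp_pos (M * a)); pose proof (Hineq c Hc).
  assert (Hslope : 0 <= E' c * exp (M * c) + E c * (exp (M * c) * M))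
    by (replace (E' c * exp (M * c) + E c * (exp (M * c) * M))
          with (exp (M * c) * (E' c + M * E c)) by ring; nra).
  assert (E a * exp (M * a) <= 0) by nra.
  nra.
Qed.

Lemma sum4_mul2_ge (p b : vec) K : sumsq b <= K * sumsq p ->
  - (1 + K) * sumsq p <= sum4 (fun i => 2 * p i * b i).
Proof.
  intros Hb. pose proof (sumsq_ge0 (vadd p b)).
  assert (sumsq (vadd p b) = sum4 (fun i => 2 * p i * b i) + sumsq p + sumsq b)
    by (unfold sumsq, vadd, sum4; ring).
  lra.
Qed.

Lemma derivable_pt_lim_mapply (g : mat) (u : R -> vec) (l : vec) c i :
  (forall j, derivable_pt_lim (fun s => u s j) c (l j)) ->
  derivable_pt_lim (fun s => mapply g (u s) i) c (mapply g l i).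
Proof.
  intros H. pose proof (fun j => derivable_pt_lim_scal _ (g i j) c _ (H j)) as Hs.
  exact (derivable_pt_lim_plus _ _ _ _ _ (derivable_pt_lim_plus _ _ _ _ _
           (derivable_pt_lim_plus _ _ _ _ _ (Hs i0) (Hs i1)) (Hs i2)) (Hs i3)).
Qed.

Lemma derivable_pt_lim_sumsq (u : R -> vec) (l : vec) c :
  (forall j, derivable_pt_lim (fun s => u s j) c (l j)) ->
  derivable_pt_lim (fun s => sumsq (u s)) c (sum4 (fun j => 2 * u c j * l j)).
Proof.
  intros H.
  assert (Hs : forall j, derivable_pt_lim (fun s => u s j * u s j) c (2 * u c j * l j)).
  { intros j. pose proof (derivable_pt_lim_mult _ _ c _ _ (H j) (H j)) as D.
    replace (2 * u c j * l j) with (l j * u c j + u c j * l j) by ring. exact D. }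
  exact (derivable_pt_lim_plus _ _ _ _ _ (derivable_pt_lim_plus _ _ _ _ _
           (derivable_pt_lim_plus _ _ _ _ _ (Hs i0) (Hs i1)) (Hs i2)) (Hs i3)).
Qed.

Section Invariance.

Variables (F : vec -> vec) (g : mat) (phi : R -> vec).
Hypothesis HF : locally_lipschitz F.
Hypothesis Hcomm : forall x, F (mapply g x) = mapply g (F x).
Hypothesis Hg : forall i j, Rabs (g i j) <= 1.
Hypothesis Hsol : is_solution_on F phi (fun t => t <= 0).

Let defect t := vsub (mapply g (phi t)) (phi t).

Lemma defect_derivative c i : c <= 0 ->
  derivable_pt_lim (fun s => defect s i) c (vsub (F (mapply g (phi c))) (F (phi c)) i).
Proof.
  intros Hc. rewrite Hcomm.
  exact (derivable_pt_lim_minus _ _ _ _ _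
           (derivable_pt_lim_mapply g phi (F (phi c)) c i (Hsol c Hc)) (Hsol c Hc i)).
Qed.

Lemma defect_vanishes_locally tau : tau <= 0 -> (forall i, defect tau i = 0) ->
  exists d, 0 < d /\ forall t, tau - d < t <= tau -> forall i, defect t i = 0.
Proof.
  intros Htau Hz.
  set (p := phi tau).
  destruct (HF p) as [rho [K [Hrho [HK Hlip]]]].
  destruct (I4_uniform_radius
      (fun j d => forall t, Rabs (t - tau) < d -> Rabs (phi t j - phi tau j) < rho / 4))
    as [d [Hd Hnear]].
  { intros j a b Hab HQ t Ht. apply HQ. lra. }
  { intros j. apply (derivable_pt_lim_eps_delta _ _ _ (Hsol tau Htau j)). lra. }
  assert (Hboxes : forall t, Rabs (t - tau) < d -> box p rho (phi t) /\ box p rho (mapply g (phi t))).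
  { intros t Ht. split; intros i.
    - specialize (Hnear i t Ht). unfold p. lra.
    - replace (mapply g (phi t) i - p i) with (mapply g (vsub (phi t) p) i).
      + replace rho with (4 * (rho / 4)) by field.
        apply mapply_coord_bound; [exact Hg|]. intros j. exact (Hnear j t Ht).
      + specialize (Hz i). unfold defect, vsub in Hz. unfold p, mapply, vsub, sum4 in *. lra. }
  exists d. split; [exact Hd|]. intros t [Ht1 Ht2] i.
  destruct (Req_dec t tau) as [->|Hne]; [exact (Hz i)|].
  apply sumsq_le0_coord.
  apply (gronwall_backward (fun s => sumsq (defect s))
           (fun c => sum4 (fun j => 2 * defect c j * vsub (F (mapply g (phi c))) (F (phi c)) j))
           (1 + K) t tau); [lra| | |].
  - intros c Hc. apply derivable_pt_lim_sumsq. intros j. apply defect_derivative. lra.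
  - intros c Hc.
    destruct (Hboxes c ltac:(apply Rabs_def1; lra)) as [Hb1 Hb2].
    apply sum4_mul2_ge. exact (Hlip _ _ Hb2 Hb1).
  - unfold sumsq, sum4. rewrite !Hz. ring.
Qed.

Lemma solution_stays_fixed : mapply g (phi 0) = phi 0 -> forall t, t <= 0 -> mapply g (phi t) = phi t.
Proof.
  intros H0.
  assert (Hdefect : forall t, t <= 0 -> forall i, defect t i = 0).
  { apply (backward_induction (fun t => forall i, defect t i = 0)).
    - intros i. unfold defect, vsub. rewrite H0. ring.
    - exact defect_vanishes_locally.
    - intros tau Htau Hright i.
      apply (vanishes_at_left_end (fun s => defect s i) tau Htau).
      + exact (derivable_pt_lim_eps_delta _ _ _ (defect_derivative tau i ltac:(lra))).
      + intros s Hs. exact (Hright s Hs i). }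
  intros t Ht. apply functional_extensionality. intros i.
  specialize (Hdefect t Ht i). unfold defect, vsub in Hdefect. lra.
Qed.

End Invariance.

Lemma fixed_at_limit_at_minus_inf g phi xi : (forall i j, Rabs (g i j) <= 1) ->
  (forall t, t <= 0 -> mapply g (phi t) = phi t) -> tends_at_minus_inf phi xi ->
  mapply g xi = xi.
Proof.
  intros Hg Hfix Hlim. apply functional_extensionality. intros i.
  apply NNPP. intros Hne.
  assert (Hpos : 0 < Rabs (mapply g xi i - xi i) / 5)
    by (apply Rdiv_lt_0_compat; [apply Rabs_pos_lt; lra|lra]).
  destruct (Hlim _ Hpos) as [T HT].
  set (w := phi (Rmin T 0)).
  assert (Hclose : forall j, Rabs (vsub xi w j) < Rabs (mapply g xi i - xi i) / 5).
  { intros j. unfold vsub. rewrite <- Rabs_Ropp. replace (- (xi j - w j)) with (vsub w xi j)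
      by (unfold vsub; ring).
    eapply Rle_lt_trans; [apply coord_le_vnorm|]. apply HT, Rmin_l. }
  assert (Hw : mapply g w i = w i) by (unfold w; rewrite Hfix; [reflexivity|apply Rmin_r]).
  pose proof (mapply_coord_bound g (vsub xi w) _ i Hg Hclose).
  pose proof (Hclose i).
  assert (Hsplit : mapply g xi i - xi i = mapply g (vsub xi w) i + - vsub xi w i)
    by (unfold mapply, vsub, sum4 in *; lra).
  pose proof (Rabs_triang (mapply g (vsub xi w) i) (- vsub xi w i)).
  rewrite Rabs_Ropp, <- Hsplit in H1. lra.
Qed.

Lemma is_solution_on_reverse f phi : is_solution_on f phi (fun t => 0 <= t) ->
  is_solution_on (fun x i => - f x i) (fun t => phi (- t)) (fun t => t <= 0).
Proof.
  intros Hsol t Ht i.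
  pose proof (derivable_pt_lim_comp (fun u => - u) (fun u => phi u i) t (-1) _
               (derivable_pt_lim_opp id t 1 (derivable_pt_lim_id t)) (Hsol (- t) ltac:(lra) i)) as D.
  replace (- f (phi (- t)) i) with (f (phi (- t)) i * -1) by ring. exact D.
Qed.

Section Isotropy.

Variables (G : mat -> Prop) (f : vec -> vec) (Df : vec -> mat) (S : mat -> Prop).
Hypothesis HG : finite_orthogonal_group G.
Hypothesis Heqv : equivariant G f.
Hypothesis HC1 : is_C1 f Df.
Hypothesis HS : isotropy_subgroup G S.

Lemma isotropy_orthogonal_commuting g : S g ->
  (forall i j, Rabs (g i j) <= 1) /\ forall x, f (mapply g x) = mapply g (f x).
Proof.
  intros Hg. destruct HS as [x0 Hx0]. destruct (proj1 (Hx0 g) Hg) as [HGg _].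
  destruct HG as [_ [_ [_ [_ Horth]]]].
  split; [exact (orthogonal_entry_bound g (Horth g HGg))|]. intros x. exact (Heqv g x HGg).
Qed.

Lemma Wu_limit_in_Fix xi x : Fix S x -> Wu f xi x -> Fix S xi.
Proof.
  intros Hx [phi [Hphi0 [Hsol Hlim]]] g Hg.
  destruct (isotropy_orthogonal_commuting g Hg) as [Hbound Hcomm].
  apply (fixed_at_limit_at_minus_inf g phi xi Hbound); [|exact Hlim].
  apply (solution_stays_fixed f g phi (C1_locally_lipschitz f Df HC1) Hcomm Hbound Hsol).
  rewrite Hphi0. exact (Hx g Hg).
Qed.

Lemma Ws_limit_in_Fix xi x : Fix S x -> Ws f xi x -> Fix S xi.
Proof.
  intros Hx [phi [Hphi0 [Hsol Hlim]]] g Hg.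
  destruct (isotropy_orthogonal_commuting g Hg) as [Hbound Hcomm].
  apply (fixed_at_limit_at_minus_inf g (fun t => phi (- t)) xi Hbound).
  - apply (solution_stays_fixed (fun x i => - f x i) g (fun t => phi (- t))).
    + exact (locally_lipschitz_opp f (C1_locally_lipschitz f Df HC1)).
    + intros y. rewrite Hcomm. apply functional_extensionality. intros i.
      unfold mapply, sum4. ring.
    + exact Hbound.
    + exact (is_solution_on_reverse f phi Hsol).
    + rewrite Ropp_0, Hphi0. exact (Hx g Hg).
  - intros e He. destruct (Hlim e He) as [T HT]. exists (- T). intros t Ht. apply HT. lra.
Qed.

End Isotropy.

Lemma Fix_lincomb S x y a b : Fix S x -> Fix S y -> Fix S (vadd (vscale a x) (vscale b y)).
Proof.
  intros Hx Hy g Hg. rewrite <- (Hx g Hg) at 2. rewrite <- (Hy g Hg) at 2.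
  apply functional_extensionality. intros i. unfold mapply, vadd, vscale, sum4. ring.
Qed.

Lemma same_component_of_segment (P : vec -> Prop) x y :
  (forall t, 0 <= t <= 1 -> P (vadd (vscale (1 - t) x) (vscale t y))) -> same_component P x y.
Proof.
  intros Hseg. exists (fun t => vadd (vscale (1 - t) x) (vscale t y)).
  split; [|split; [|split]].
  - intros i. unfold vadd, vscale. reg.
  - apply functional_extensionality. intros i. unfold vadd, vscale. ring.
  - apply functional_extensionality. intros i. unfold vadd, vscale. ring.
  - exact Hseg.
Qed.

Lemma segment_avoids_origin x y t : x <> vzero -> (forall a, y <> vscale a x) ->
  vadd (vscale (1 - t) x) (vscale t y) <> vzero.
Proof.
  intros Hx Hy Hzero. destruct (Req_dec t 0) as [->|Ht].
  - apply Hx. rewrite <- Hzero. apply functional_extensionality. intros i.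
    unfold vadd, vscale. ring.
  - apply (Hy ((t - 1) / t)). apply functional_extensionality. intros i.
    assert (Hi : vadd (vscale (1 - t) x) (vscale t y) i = 0) by (rewrite Hzero; reflexivity).
    unfold vadd, vscale in *. field_simplify_eq; [lra|exact Ht].
Qed.

Theorem mainTheorem2
  (G : mat -> Prop) (f : vec -> vec) (Df : vec -> mat)
  (xi1 xi2 : vec) (S1 S2 : mat -> Prop) (Cn1 Cn2 : vec -> Prop) :
  finite_orthogonal_group G ->
  equivariant G f ->
  is_C1 f Df ->
  simple_cycle2 G f Df xi1 xi2 S1 S2 Cn1 Cn2 ->
  exists u : vec, u <> vzero /\
    (exists a : R, xi1 = vscale a u) /\ (exists b : R, xi2 = vscale b u).
Proof.
  intros HG Heqv HC1 [Hcycle [_ [_ [_ [Honce _]]]]].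
  destruct Hcycle as [_ [_ [Hne [HS1 [HS2 [[x1 Hx1] [Hconn1 [_ [_ [[x2 Hx2] [Hconn2 [_ [_ Hnz]]]]]]]]]]]]].
  destruct (Hconn1 x1 Hx1) as [Hx1P [Hx1u Hx1s]].
  destruct (Hconn2 x2 Hx2) as [Hx2P [Hx2u Hx2s]].
  assert (Hxi1 : Fix S1 xi1 /\ Fix S2 xi1)
    by (split; [exact (Wu_limit_in_Fix G f Df S1 HG Heqv HC1 HS1 xi1 x1 Hx1P Hx1u)
               |exact (Ws_limit_in_Fix G f Df S2 HG Heqv HC1 HS2 xi1 x2 Hx2P Hx2s)]).
  assert (Hxi2 : Fix S1 xi2 /\ Fix S2 xi2)
    by (split; [exact (Ws_limit_in_Fix G f Df S1 HG Heqv HC1 HS1 xi2 x1 Hx1P Hx1s)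
               |exact (Wu_limit_in_Fix G f Df S2 HG Heqv HC1 HS2 xi2 x2 Hx2P Hx2u)]).
  assert (Hxi1_nz : xi1 <> vzero) by (apply Hnz; auto).
  destruct (classic (exists a, xi2 = vscale a xi1)) as [[a Ha]|Hnot].
  - exists xi1. split; [exact Hxi1_nz|]. split; [|exists a; exact Ha].
    exists 1. apply functional_extensionality. intros i. unfold vscale. ring.
  - exfalso. apply Hne.
    apply (Honce xi1 xi2 (or_introl eq_refl) (or_intror (or_introl eq_refl))); [|exact Hxi1|exact Hxi1_nz].
    apply same_component_of_segment. intros t _. split.
    + split; apply Fix_lincomb; tauto.
    + apply segment_avoids_origin; [exact Hxi1_nz|]. intros a Ha. exact (Hnot (ex_intro _ a Ha)).
Qed.
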